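(* Every prime number that is antipalindromic in base $3$ has a base-$3$ expansion with an odd number $n$ of digits, where $n\ge 3$.
   Context: For an integer $b\ge 2$, every natural number $m$ has a unique base-$b$ expansion $m=a_nb^n+\dots+a_1b+a_0$ with $a_0,\dots,a_n\in\{0,1,\dots,b-1\}$ and $a_n\neq 0$. The number $m$ is antipalindromic in base $b$ if $a_j=b-1-a_{n-j}$ for all $j\in\{0,1,\dots,n\}$. *)

From mathcomp Require Import all_boot.
Set Implicit Arguments. Unset Strict Implicit. Unset Printing Implicit Defensive.

(* Base-b digits of m, least significant first: [a_0; a_1; ...; a_n],
   with last digit a_n <> 0 when m > 0; digits of 0 is the empty list.
   Fuel m suffices since m %/ b < m for b >= 2 and m > 0. *)
Fixpoint digits_aux (b fuel m : nat) : seq nat :=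
  match fuel with
  | 0 => [::]
  | fuel'.+1 => if m == 0 then [::] else (m %% b) :: digits_aux b fuel' (m %/ b)
  end.

Definition digits (b m : nat) : seq nat := digits_aux b m m.

Definition antipalindromic (b m : nat) : Prop :=
  0 < m /\
  let s := digits b m in
  forall j, j < size s -> nth 0 s j = b - 1 - nth 0 s (size s - 1 - j).

From mathcomp Require Import all_boot zify.

Set Implicit Arguments.
Unset Strict Implicit.
Unset Printing Implicit Defensive.

(* Antipalindromic digits pair up as d and b-1-d, so in base 3 the digit sum
   equals the number of digits.  Since 3 = 1 (mod 2), the digit sum has the
   parity of the number itself; hence every odd antipalindromic number has an
   odd number of digits.  The only even prime 2 has the single digit 2 and is
   not antipalindromic, and a prime p >= 3 has at least two digits. *)
Section Digits.

Variable b : nat.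
Hypothesis b_gt1 : 1 < b.

Lemma digits_aux_fuel f g m :
  m <= f -> m <= g -> digits_aux b f m = digits_aux b g m.
Proof.
elim: f g m => [|f IHf] [|g] [|m] //= m_lt_f m_lt_g; congr (_ :: _).
have m_div_lt : m.+1 %/ b < m.+1 by rewrite ltn_Pdiv.
by apply: IHf; rewrite -ltnS (leq_trans m_div_lt).
Qed.

Lemma digits_rec m : 0 < m -> digits b m = m %% b :: digits b (m %/ b).
Proof.
case: m => // m _; rewrite /digits /=; congr (_ :: _).
by apply: digits_aux_fuel => //; rewrite -ltnS ltn_Pdiv.
Qed.

Lemma digits_ltn m : all (fun d => d < b) (digits b m).
Proof.
elim/ltn_ind: m => [[|m] IHm] //.
by rewrite digits_rec //= ltn_mod (ltnW b_gt1) IHm // ltn_Pdiv.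
Qed.

Lemma digits_sum_mod m : sumn (digits b m) = m %[mod b.-1].
Proof.
elim/ltn_ind: m => [[|m] IHm] //.
rewrite digits_rec //= -modnDmr IHm ?ltn_Pdiv // modnDmr.
have mulb_mod q : q * b = q %[mod b.-1].
  by rewrite -{1}(prednK (ltnW b_gt1)) mulnSr modnMDl.
by rewrite [in RHS](divn_eq m.+1 b) -[in RHS]modnDml mulb_mod modnDml addnC.
Qed.

Lemma size_digits_gt1 m : b <= m -> 1 < size (digits b m).
Proof.
move=> b_le_m; have m_gt0 : 0 < m by apply: leq_trans (ltnW b_gt1) b_le_m.
by rewrite digits_rec // digits_rec ?divn_gt0 ?(ltnW b_gt1).
Qed.

Lemma odd_sumn_digits m : odd b -> odd (sumn (digits b m)) = odd m.
Proof.
move=> b_odd; have two_dvd : 2 %| b.-1.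
  by rewrite dvdn2 -subn1 oddB ?b_odd // ltnW.
move/(congr1 (modn^~ 2)): (digits_sum_mod m).
by rewrite !modn_dvdm // !modn2; do 2!case: odd.
Qed.

End Digits.

Lemma sumn_map_subn c s :
  all (fun d => d <= c) s -> sumn (map (subn c) s) + sumn s = c * size s.
Proof.
elim: s => [|d s IHs] /=; first by rewrite muln0.
by case/andP=> d_le_c /IHs; rewrite mulnS; lia.
Qed.

Lemma antipalindromic_digits_rev b m : antipalindromic b m ->
  digits b m = map (subn (b - 1)) (rev (digits b m)).
Proof.
case=> _ /=; set s := digits b m => anti_s.
apply: (@eq_from_nth _ 0); first by rewrite size_map size_rev.
move=> j j_lt; rewrite (nth_map 0) ?size_rev // nth_rev // anti_s //.
by congr (_ - nth 0 s _); lia.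
Qed.

Lemma antipalindromic_sumn_digits b m : 1 < b -> antipalindromic b m ->
  2 * sumn (digits b m) = (b - 1) * size (digits b m).
Proof.
move=> b_gt1 /antipalindromic_digits_rev; set s := digits b m => s_eq.
have s_le : all (fun d => d <= b - 1) s.
  by apply: sub_all (digits_ltn b_gt1 m) => d /=; lia.
by rewrite mul2n -addnn {1}s_eq map_rev sumn_rev sumn_map_subn.
Qed.

Lemma not_antipalindromic_3_2 : ~ antipalindromic 3 2.
Proof. by case=> _ /(_ 0 isT) /eqP. Qed.

Theorem mainTheorem7 (p : nat) :
  prime p -> antipalindromic 3 p ->
  odd (size (digits 3 p)) /\ 3 <= size (digits 3 p).
Proof.
move=> p_prime p_anti.
have p_odd : odd p.
  apply/negPn/negP => /(prime_oddPn p_prime) p_eq2.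
  by move: p_anti; rewrite p_eq2 => /not_antipalindromic_3_2.
have sumn_eq_size : sumn (digits 3 p) = size (digits 3 p).
  by apply/eqP; rewrite -(eqn_pmul2l (isT : 0 < 2)) antipalindromic_sumn_digits.
have size_odd : odd (size (digits 3 p)).
  by rewrite -sumn_eq_size (odd_sumn_digits (isT : 1 < 3)).
split=> //.
have := size_digits_gt1 (isT : 1 < 3) (odd_prime_gt2 p_odd p_prime).
by move: size_odd; case: (size _) => [|[|[|n]]].
Qed.
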